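(* Let $\Omega$ be a compact Hausdorff space, let $E\subset \Omega$ be a closed set, and let $J=\{f\in C(\Omega): f(e)=0 \text{ for all } e\in E\}$. Then the pair $(C(\Omega),J)$ has the compact quotient lifting property (CQLP).
   Context: $C(\Omega)$ denotes the Banach space of real-valued continuous functions on $\Omega$ with the supremum norm. For a Banach space $X$ and a closed subspace $J\subset X$, let $\pi:X\to X/J$ be the quotient map. The pair $(X,J)$ has the compact quotient lifting property (CQLP) if for every Banach space $Z$ and every compact linear operator $T:Z\to X/J$ there is a compact linear operator $S:Z\to X$ with $\pi\circ S=T$ and $\|S\|=\|T\|$. *)

From HB Require Import structures.
From mathcomp Require Import all_boot all_order all_algebra.
From mathcomp Require Import all_classical all_reals all_analysis.
Set Implicit Arguments. Unset Strict Implicit. Unset Printing Implicit Defensive.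
Import Order.TTheory GRing.Theory Num.Theory.
Import numFieldNormedType.Exports.
Local Open Scope classical_set_scope.
Local Open Scope ring_scope.

Section Defs.
Context {T : topologicalType} {R : realType}.

Definition supnorm (f : T -> R) : R := sup [set `|f x| | x in [set: T]].

Definition qnorm (J : set (T -> R)) (f : T -> R) : R :=
  inf [set supnorm (fun x => f x - g x) | g in J].

(* a set A of (representatives of) elements of C(T) (resp. C(T)/J, with
   p = qnorm J) is relatively compact for the (semi)norm p: every sequence
   in A has a subsequence converging for p to some element of C(T)
   (resp. C(T)/J). *)
Definition seq_rel_compact (p : (T -> R) -> R) (A : set (T -> R)) : Prop :=
  forall u : nat -> T -> R, (forall n, A (u n)) ->
  exists phi : nat -> nat, {homo phi : m n / (m < n)%N} /\
    exists g : T -> R, continuous g /\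
      (fun n => p (fun x => u (phi n) x - g x)) @ \oo --> (0 : R).

Definition unit_ball (Z : normedModType R) : set Z := [set z | `|z| <= 1].

Definition compact_op (Z : normedModType R) (p : (T -> R) -> R)
  (t : Z -> T -> R) : Prop := seq_rel_compact p (t @` (@unit_ball Z)).

Definition op_norm (Z : normedModType R) (p : (T -> R) -> R)
  (t : Z -> T -> R) : R := sup [set p (t z) | z in (@unit_ball Z)].

(* A linear operator Tq : Z -> C(T)/J is represented by a
   function t : Z -> C(T) choosing a representative of each class Tq z;
   linearity of Tq means linearity of t modulo J, and pi o S = Tq means
   S z - t z lies in J for all z. *)
Definition CQLP_C (J : set (T -> R)) : Prop :=
  forall (Z : completeNormedModType R) (t : Z -> T -> R),
    (forall z, continuous (t z)) ->
    (forall (a : R) (z w : Z),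
        J (fun x => t (a *: z + w) x - (a * t z x + t w x))) ->
    compact_op (qnorm J) t ->
    exists s : Z -> T -> R,
      [/\ (forall z, continuous (s z)),
          (forall (a : R) (z w : Z) (x : T),
              s (a *: z + w) x = a * s z x + s w x),
          compact_op supnorm s,
          (forall z, J (fun x => s z x - t z x)) &
          op_norm supnorm s = op_norm (qnorm J) t].

End Defs.

From HB Require Import structures.
From mathcomp Require Import all_boot all_order all_algebra.
From mathcomp Require Import all_classical all_reals all_analysis.
From mathcomp Require Import ring lra.
From mathcomp Require Import finmap.
Set Implicit Arguments. Unset Strict Implicit. Unset Printing Implicit Defensive.
Import Order.TTheory GRing.Theory Num.Theory.
Import numFieldNormedType.Exports.
Local Open Scope classical_set_scope.
Local Open Scope ring_scope.

(* A compact operator into C(T)/J is given by representatives t z; the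
   quotient norm of f + J dominates sup_E |f|, so the restrictions t z|E form
   a linear, totally bounded family.  The lift is built without any extension
   theorem (Tietze, Urysohn), in two stages.
   1. Extension.  Gluing the values of a family Rf at finitely many points of
      E with a partition of unity (subordinate to level sets of continuous
      oscillation functions, finitely many thanks to a finite net of the
      family) gives a linear continuous family L with a controlled modulus in
      z which approximates Rf on E up to half its size.  Iterating on the
      residual and summing the geometric series gives a linear family S of
      continuous functions agreeing with t on E.
   2. Normalisation.  The pointwise norm N x = sup_{|z|<=1} |S z x| is
      continuous and bounded by the quotient operator norm M on E; the lift
      x |-> M / max(M, N x) * S z x then has norm exactly M, and it is compact
      because its modulus in z lets every sequence with a convergent quotient
      image converge uniformly (completeness of C(T)). *)

Section RealFacts.
Context {R : realType}.

Lemma cvgn_anchored_cauchy (a : nat -> R) :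
  (forall eps, 0 < eps -> exists N, forall n, (N <= n)%N -> `|a n - a N| <= eps) ->
  cvgn a.
Proof.
move=> hc; apply/cauchy_cvgP/cauchy_exP => e e0.
have e2 : 0 < e / 2 by rewrite divr_gt0.
have [N hN] := hc _ e2; exists (a N); exists N => // k /= Nk.
rewrite -ball_normE /ball_ /= distrC (le_lt_trans (hN _ Nk)) //.
by rewrite ltr_pdivrMr // ltr_pMr // ltr1n.
Qed.

Lemma limn_dist_le (a : nat -> R) n B : cvgn a ->
  (forall k, (n <= k)%N -> `|a k - a n| <= B) -> `|limn a - a n| <= B.
Proof.
move=> ca hab; rewrite leNgt; apply/negP => hlt.
set l := limn a in hlt.
have e0 : 0 < `|l - a n| - B by rewrite subr_gt0.
move: ca => /cvgrPdist_lt /(_ _ e0) [N _ HN].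
have := HN (maxn N n) (leq_maxl _ _); rewrite -/l.
have := hab (maxn N n) (leq_maxr _ _).
set y := a (maxn N n) => h1 h2.
have h3 : `|l - a n| <= `|l - y| + `|y - a n|.
  by rewrite (_ : l - a n = (l - y) + (y - a n)); [exact: ler_normD | ring].
lra.
Qed.

Lemma geometric_half_lt (K eps : R) : 0 < eps -> exists N, K * (1/2) ^+ N < eps.
Proof.
move=> e0; have : `|(1/2 : R)| < 1.
  by rewrite ger0_norm ?divr_ge0 // ltr_pdivrMr // mul1r ltr1n.
move=> /(cvg_geometric K) /cvgrPdist_lt /(_ _ e0) [N _ HN].
exists N; have := HN N (leqnn N); rewrite sub0r normrN /=.
by apply: le_lt_trans; exact: ler_norm.
Qed.

Lemma eq0_geometric_bound (a K : R) : (forall n, `|a| <= K * (1/2) ^+ n) -> a = 0.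
Proof.
move=> h; apply/eqP; apply: contraT => an0.
have a0 : 0 < `|a| by rewrite normr_gt0.
have [N hN] := geometric_half_lt K a0.
by have := lt_le_trans hN (h N); rewrite ltxx.
Qed.

Lemma dist_le3 (a a' b b' e1 e2 e3 : R) :
  `|a - a'| <= e1 -> `|a' - b'| <= e2 -> `|b - b'| <= e3 -> `|a - b| <= e1 + e2 + e3.
Proof.
move=> h1 h2 h3.
have -> : a - b = (a - a') + (a' - b') - (b - b') by ring.
apply: le_trans (ler_normB _ _) _.
by apply: le_trans (lerD (ler_normD _ _) (lexx _)) _; rewrite !lerD.
Qed.

Lemma third_split (eps : R) : eps = eps / 3 + eps / 3 + eps / 3.
Proof. by field. Qed.

Lemma ler_sum_mem (I : eqType) (r : seq I) (F G : I -> R) :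
  (forall i, i \in r -> F i <= G i) -> \sum_(i <- r) F i <= \sum_(i <- r) G i.
Proof. by move=> h; rewrite big_seq [X in _ <= X]big_seq; apply: ler_sum. Qed.

Lemma ler_term_sum (I : eqType) (r : seq I) (F : I -> R) i :
  (forall j, 0 <= F j) -> i \in r -> F i <= \sum_(j <- r) F j.
Proof.
move=> F0; elim: r => [//|j r IH]; rewrite in_cons big_cons => /orP[/eqP <-|ir].
  by rewrite lerDl sumr_ge0.
by rewrite (le_trans (IH ir)) // lerDr.
Qed.

Lemma linear_ball_bound (Z : normedModType R) (F : Z -> R) c :
  (forall a z w, F (a *: z + w) = a * F z + F w) ->
  (forall z, `|z| <= 1 -> `|F z| <= c) -> forall z, `|F z| <= c * `|z|.
Proof.
move=> Fl Fb z.
have F0 : F 0 = 0.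
  have := Fl 1 0 0; rewrite scaler0 add0r mul1r => h.
  by apply/(addrI (F 0)); rewrite addr0 -h.
have [->|nz] := eqVneq z 0; first by rewrite F0 !normr0 mulr0.
have n0 : 0 < `|z| by rewrite normr_gt0.
pose w := `|z|^-1 *: z.
have zw : z = `|z| *: w + 0 by rewrite addr0 /w scalerA divff ?scale1r // gt_eqF.
have -> : F z = `|z| * F w by rewrite {1}zw Fl F0 addr0.
rewrite normrM (ger0_norm (ltW n0)) mulrC ler_pM2r //.
apply: Fb; rewrite /w normrZ normfV normr_id mulVf // gt_eqF //.
Qed.

End RealFacts.

Lemma increasing_ge_id (phi : nat -> nat) :
  {homo phi : m n / (m < n)%N} -> forall n, (n <= phi n)%N.
Proof. by move=> inc; elim=> // n IH; apply: leq_ltn_trans IH (inc _ _ (ltnSn n)). Qed.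

(* The open-cover characterisation of compactness, without a pointed type. *)
Lemma compact_cover_compact (T : topologicalType) (A : set T) :
  compact A -> cover_compact A.
Proof.
move=> cA; have [[x _]|A0] := pselect (A !=set0).
  pose pT : ptopologicalType := HB.pack T (isPointed.Build T x).
  have h := @compact_cover pT.
  have : @compact pT A by exact: cA.
  by rewrite h.
move=> I D f _ _; exists fset0 => // y Ay; exfalso; by apply: A0; exists y.
Qed.

Section Continuity.
Context {T : topologicalType} {R : realType}.
Implicit Types f g : T -> R.

Lemma cont_cst (c : R) : continuous (fun _ : T => c).
Proof. by move=> x; exact: cvg_cst. Qed.
Lemma cont_add f g : continuous f -> continuous g -> continuous (fun x => f x + g x).
Proof. by move=> cf cg x; apply: cvgD; [exact: cf|exact: cg]. Qed.
Lemma cont_sub f g : continuous f -> continuous g -> continuous (fun x => f x - g x).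
Proof. by move=> cf cg x; apply: cvgB; [exact: cf|exact: cg]. Qed.
Lemma cont_mul f g : continuous f -> continuous g -> continuous (fun x => f x * g x).
Proof. by move=> cf cg x; apply: cvgM; [exact: cf|exact: cg]. Qed.
Lemma cont_norm f : continuous f -> continuous (fun x => `|f x|).
Proof. by move=> cf x; apply: cvg_norm; exact: cf. Qed.
Lemma cont_max f g : continuous f -> continuous g ->
  continuous (fun x => Num.max (f x) (g x)).
Proof. by move=> cf cg x; apply: (@continuous_max R T f g x); [exact: cf|exact: cg]. Qed.
Lemma cont_inv f : (forall x, f x != 0) -> continuous f -> continuous (fun x => (f x)^-1).
Proof. by move=> nz cf x; apply: cvgV; [exact: nz| exact: cf]. Qed.

Lemma cont_sum (I : Type) (s : seq I) (F : I -> T -> R) :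
  (forall i, continuous (F i)) -> continuous (fun x => \sum_(i <- s) F i x).
Proof.
move=> cF; elim: s => [|i s IH].
  by under eq_fun do rewrite big_nil; exact: cont_cst.
by under eq_fun do rewrite big_cons; apply: cont_add.
Qed.

Lemma cont_bigmax (I : Type) (s : seq I) (F : I -> T -> R) :
  (forall i, continuous (F i)) -> continuous (fun x => \big[Num.max/0]_(i <- s) F i x).
Proof.
move=> cF; elim: s => [|i s IH].
  by under eq_fun do rewrite big_nil; exact: cont_cst.
by under eq_fun do rewrite big_cons; apply: cont_max.
Qed.

Lemma continuous_uniform_approx f :
  (forall eps, 0 < eps -> exists2 g, continuous g & forall x, `|f x - g x| <= eps) ->
  continuous f.
Proof.
move=> happ x; apply/cvgrPdist_le => eps e0.
have e3 : 0 < eps / 3 by rewrite divr_gt0.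
have [g cg hg] := happ _ e3.
have := cg x; move=> /cvgrPdist_le /(_ _ e3); apply: filterS => y hy.
by rewrite [eps]third_split; apply: dist_le3; [exact: hg | exact: hy | exact: hg].
Qed.

Lemma near_all_mem (I : eqType) (s : seq I) (P : I -> T -> Prop) (x : T) :
  (forall i, i \in s -> nbhs x (P i)) -> nbhs x [set y | forall i, i \in s -> P i y].
Proof.
elim: s => [_|i s IH h]; first by apply: filterE => y j; rewrite in_nil.
have h1 := h i (mem_head _ _).
have h2 := IH (fun j hj => h j (introT orP (or_intror hj) : j \in i :: s)).
apply: filterS (filterI h1 h2) => y [hy1 hy2] j; rewrite in_cons => /orP[/eqP ->//|].
exact: hy2.
Qed.

End Continuity.

Section SupNorm.
Context {T : topologicalType} {R : realType}.
Implicit Types f g : T -> R.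

Lemma supnorm_le f B : 0 <= B -> (forall x, `|f x| <= B) -> supnorm f <= B.
Proof.
move=> B0 HB; rewrite /supnorm.
have [[x _]|] := pselect ([set: T] !=set0).
  apply: ge_sup; first by exists `|f x|; exists x.
  by move=> _ [y _ <-]; exact: HB.
move=> ne; suff -> : [set `|f x| | x in [set: T]] = set0 by rewrite sup0.
by apply/seteqP; split => // z [y _ _]; apply: ne; exists y.
Qed.

Lemma supnorm_ge0 f : 0 <= supnorm f.
Proof.
rewrite /supnorm.
have [[x _]|] := pselect ([set: T] !=set0).
  have [hs|hs] := pselect (has_sup [set `|f x| | x in [set: T]]).
    have := sup_upper_bound hs (ex_intro2 _ _ x I erefl : [set `|f x| | x in _] `|f x|).
    exact: le_trans.
  by rewrite sup_out.
move=> ne; suff -> : [set `|f x| | x in [set: T]] = set0 by rewrite sup0.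
by apply/seteqP; split => // z [y _ _]; apply: ne; exists y.
Qed.

Lemma supnorm0 : supnorm (fun _ : T => 0 : R) = 0.
Proof.
apply/eqP; rewrite eq_le supnorm_ge0 andbT.
by apply: supnorm_le => // x; rewrite normr0.
Qed.

Lemma uniform_cauchy_limit (v : nat -> T -> R) :
  (forall n, continuous (v n)) ->
  (forall eps, 0 < eps -> exists N, forall n k, (N <= n)%N -> (N <= k)%N ->
     forall x, `|v k x - v n x| <= eps) ->
  exists2 G, continuous G & (fun n => supnorm (fun x => v n x - G x)) @ \oo --> (0 : R).
Proof.
move=> vc vcauchy.
have cv x : cvgn (fun n => v n x).
  apply: cvgn_anchored_cauchy => eps e0; have [N hN] := vcauchy eps e0.
  by exists N => n Nn; exact: hN.
pose G x := limn (fun n => v n x).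
have Gnear eps : 0 < eps -> exists N, forall n, (N <= n)%N -> forall x, `|G x - v n x| <= eps.
  move=> e0; have [N hN] := vcauchy eps e0; exists N => n Nn x.
  apply: limn_dist_le; first exact: cv.
  by move=> k nk; apply: hN => //; exact: leq_trans nk.
exists G.
  apply: continuous_uniform_approx => eps e0.
  by have [N hN] := Gnear _ e0; exists (v N) => //; exact: hN.
apply/cvgrPdist_le => eps e0; have [N hN] := Gnear eps e0.
exists N => // n Nn /=; rewrite sub0r normrN ger0_norm ?supnorm_ge0 //.
by apply: supnorm_le => [|x]; [exact: ltW | rewrite distrC; exact: hN].
Qed.

Hypothesis hcpt : compact [set: T].

Lemma continuous_bounded f : continuous f -> exists B : R, forall x, `|f x| <= B.
Proof.
move=> cf.
have : compact (f @` setT) by apply: continuous_compact => //; exact: continuous_subspaceT.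
move=> /(@compact_bounded R R^o) [M [_ HM]]; exists (M + 1) => x.
by apply: (HM (M + 1)); [rewrite ltrDl | exists x].
Qed.

Lemma supnorm_ge f x : continuous f -> `|f x| <= supnorm f.
Proof.
move=> /continuous_bounded [B HB].
apply: sup_upper_bound; last by exists x.
split; first by exists `|f x|; exists x.
by exists B => _ [y _ <-].
Qed.

Lemma supnormD f g : continuous f -> continuous g ->
  supnorm (fun x => f x + g x) <= supnorm f + supnorm g.
Proof.
move=> cf cg; apply: supnorm_le; first by rewrite addr_ge0 // supnorm_ge0.
move=> x; apply: le_trans (ler_normD _ _) _.
by rewrite lerD // supnorm_ge.
Qed.

End SupNorm.

Definition vanishing_on {T : topologicalType} {R : realType} (E : set T) :
  set (T -> R) := [set f | continuous f /\ forall e, E e -> f e = 0].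

Section QuotientNorm.
Context {T : topologicalType} {R : realType} (E : set T).
Hypothesis hcpt : compact [set: T].
Local Notation J := (@vanishing_on T R E).
Implicit Types f g : T -> R.

Lemma vanishing_on0 : J (fun _ => 0).
Proof. by split => //; exact: cont_cst. Qed.

Lemma qnorm_ge0 f : 0 <= qnorm J f.
Proof.
apply: lb_le_inf; first by exists (supnorm (fun x => f x - 0)), (fun _ => 0); first exact: vanishing_on0.
by move=> _ [g _ <-]; exact: supnorm_ge0.
Qed.

Lemma qnorm_le f g : J g -> qnorm J f <= supnorm (fun x => f x - g x).
Proof.
move=> Jg; apply: ge_inf; last by exists g.
by exists 0 => _ [h _ <-]; exact: supnorm_ge0.
Qed.

(* The quotient norm dominates the values on E: f + J "is" f restricted to E. *)
Lemma qnorm_ge_on f e : continuous f -> E e -> `|f e| <= qnorm J f.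
Proof.
move=> cf Ee.
apply: lb_le_inf; first by exists (supnorm (fun x => f x - 0)), (fun _ => 0); first exact: vanishing_on0.
move=> _ [g [cg g0] <-].
by have := supnorm_ge hcpt e (cont_sub cf cg); rewrite g0 // subr0.
Qed.

Lemma qnorm_cvg_on (f : nat -> T -> R) g : (forall n, continuous (f n)) -> continuous g ->
  (fun n => qnorm J (fun x => f n x - g x)) @ \oo --> (0 : R) ->
  forall eps, 0 < eps -> exists N, forall n, (N <= n)%N -> forall e, E e -> `|f n e - g e| <= eps.
Proof.
move=> fc cg /cvgrPdist_le cv eps e0; have [N _ HN] := cv _ e0.
exists N => n Nn e Ee; apply: le_trans (qnorm_ge_on (cont_sub (fc n) cg) Ee) _.
by have := HN n Nn; rewrite sub0r normrN ger0_norm ?qnorm_ge0.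
Qed.

Lemma qnorm_triangle f g : continuous f -> continuous g ->
  qnorm J f <= qnorm J (fun x => f x - g x) + supnorm g.
Proof.
move=> cf cg; rewrite -lerBlDr.
apply: lb_le_inf.
  by exists (supnorm (fun x => (f x - g x) - 0)), (fun _ => 0); first exact: vanishing_on0.
move=> _ [h [ch h0] <-]; rewrite lerBlDr.
apply: le_trans (qnorm_le f (conj ch h0)) _.
have -> : (fun x => f x - h x) = (fun x => (f x - g x - h x) + g x).
  by apply: funext => x; rewrite addrAC subrK.
by apply: supnormD => //; apply: cont_sub => //; exact: cont_sub.
Qed.

End QuotientNorm.

Section PartitionOfUnity.
Context {T : topologicalType} {R : realType}.

(* A partition of unity of a compact set E, indexed by finitely many points of
   E and subordinate to the sublevel sets {x | D p x < c}: this is the only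
   place where compactness of E is used to glue local data. *)
Lemma partition_of_unity (E : set T) (D : T -> T -> R) (c : R) :
  compact E -> 0 < c -> (forall p, continuous (D p)) -> (forall p, D p p = 0) ->
  exists2 ps : seq T, (forall p, p \in ps -> E p) &
  exists V : T -> T -> R,
    [/\ forall p, continuous (V p),
        forall p x, 0 <= V p x,
        forall x, \sum_(p <- ps) V p x <= 1,
        forall e, E e -> \sum_(p <- ps) V p e = 1 &
        forall p x, 0 < V p x -> D p x < c].
Proof.
move=> cE c0 Dc Dpp.
have c2 : 0 < c / 2 by rewrite divr_gt0.
have [ps psE psc] : finite_subset_cover E (fun p => [set x | D p x < c / 2]) E.
  apply: compact_cover_compact => //.
    move=> p _.
    have -> : [set x | D p x < c / 2] = D p @^-1` [set y : R | y < c / 2] by [].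
    by apply: open_comp => [x _|]; [exact: Dc | exact: open_lt].
  by move=> p Ep; exists p => //=; rewrite Dpp.
exists (enum_fset ps).
  by move=> p pin; have := psE p pin; rewrite in_setE.
pose w p x := Num.max 0 (c - D p x).
pose W x := \sum_(p <- enum_fset ps) w p x.
pose V p x := w p x / Num.max (W x) (c / 2).
have w0 p x : 0 <= w p x by rewrite le_max lexx.
have wc p : continuous (w p).
  by apply: cont_max; [exact: cont_cst | apply: cont_sub; [exact: cont_cst | exact: Dc]].
have den0 x : 0 < Num.max (W x) (c / 2) by rewrite lt_max c2 orbT.
have sumV x : \sum_(p <- enum_fset ps) V p x = W x / Num.max (W x) (c / 2).
  by rewrite /W mulr_suml.
exists V; split.
- move=> p; apply: cont_mul => //; apply: cont_inv; first by move=> x; rewrite gt_eqF.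
  by apply: cont_max; [exact: cont_sum | exact: cont_cst].
- by move=> p x; rewrite divr_ge0 // ltW.
- by move=> x; rewrite sumV ler_pdivrMr // mul1r le_max lexx.
- move=> e /psc [p pin hp].
  have We : c / 2 <= W e.
    apply: le_trans (ler_term_sum (F := fun q => w q e) (w0^~ e) pin).
    rewrite le_max; apply/orP; right.
    have -> : c / 2 = c - c / 2 by field.
    by rewrite lerB // ltW.
  rewrite sumV (_ : Num.max (W e) (c / 2) = W e); last exact/max_idPl.
  by rewrite divff // gt_eqF // (lt_le_trans c2).
- move=> p x Vp; have : 0 < w p x.
    by rewrite lt_def w0 andbT; apply/negP => /eqP h; move: Vp; rewrite /V h mul0r ltxx.
  by rewrite lt_max ltxx /= subr_gt0.
Qed.

End PartitionOfUnity.

Section Gluing.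
Context {T : topologicalType} {R : realType} {Z : normedModType R}.
Variables (ps : seq T) (V : T -> T -> R).

Definition glue (Rf : Z -> T -> R) (z : Z) (x : T) : R := \sum_(p <- ps) V p x * Rf z p.

Lemma glue_continuous Rf : (forall p, continuous (V p)) -> forall z, continuous (glue Rf z).
Proof. by move=> Vc z; apply: cont_sum => p; apply: cont_mul => //; exact: cont_cst. Qed.

Lemma glue_linear (A : set T) Rf : (forall p, p \in ps -> A p) ->
  (forall a z w p, A p -> Rf (a *: z + w) p = a * Rf z p + Rf w p) ->
  forall a z w x, glue Rf (a *: z + w) x = a * glue Rf z x + glue Rf w x.
Proof.
move=> psA Rl a z w x; rewrite /glue.
rewrite (eq_big_seq (fun p => a * (V p x * Rf z p) + V p x * Rf w p)); last first.
  by move=> p pin; rewrite Rl; [ring | exact: psA].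
by rewrite big_split /= mulr_sumr.
Qed.

Lemma glue_sub Rf z w x :
  glue Rf z x - glue Rf w x = \sum_(p <- ps) V p x * (Rf z p - Rf w p).
Proof. by rewrite /glue -sumrB; apply: eq_bigr => p _; rewrite mulrBr. Qed.

Hypothesis V_ge0 : forall p x, 0 <= V p x.
Hypothesis V_sum_le1 : forall x, \sum_(p <- ps) V p x <= 1.

Lemma weighted_sum_le (F : T -> R) B x : 0 <= B ->
  (forall p, p \in ps -> 0 < V p x -> `|F p| <= B) ->
  `|\sum_(p <- ps) V p x * F p| <= B.
Proof.
move=> B0 hF; apply: le_trans (ler_norm_sum _ _ _) _.
apply: le_trans (_ : \sum_(p <- ps) V p x * B <= _); last first.
  by rewrite -mulr_suml ler_piMl.
apply: ler_sum_mem => p pin; rewrite normrM ger0_norm //.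
have [->|Vn] := eqVneq (V p x) 0; first by rewrite !mul0r.
by apply: ler_wpM2l => //; apply: hF; rewrite // lt_def Vn V_ge0.
Qed.

End Gluing.

Lemma unit_ball0 {R : realType} (Z : normedModType R) : @unit_ball R Z 0.
Proof. by rewrite /unit_ball /= normr0 ler01. Qed.

Section Lift.
Context {T : topologicalType} {R : realType} (E : set T).
Hypothesis hcpt : compact [set: T].
Hypothesis hE : closed E.
Local Notation J := (@vanishing_on T R E).
Context (Z : normedModType R) (t : Z -> T -> R).
Hypothesis t_cont : forall z, continuous (t z).
Hypothesis t_lin : forall (a : R) (z w : Z),
  J (fun x => t (a *: z + w) x - (a * t z x + t w x)).
Hypothesis t_compact : compact_op (qnorm J) t.

Lemma t_linear_on a z w e : E e -> t (a *: z + w) e = a * t z e + t w e.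
Proof. by move=> Ee; apply/eqP; rewrite -subr_eq0; apply/eqP; exact: (t_lin a z w).2. Qed.

Lemma t_subseq (u : nat -> Z) : (forall n, `|u n| <= 1) ->
  exists2 phi : nat -> nat, {homo phi : m n / (m < n)%N} &
  exists2 g, continuous g &
    (fun n => qnorm J (fun x => t (u (phi n)) x - g x)) @ \oo --> (0 : R).
Proof.
move=> ub; have tc : seq_rel_compact (qnorm J) (t @` @unit_ball R Z) := t_compact.
have [n|phi [inc [g [cg cv]]]] := tc (fun n => t (u n)); first by exists (u n) => //; exact: ub.
by exists phi => //; exists g.
Qed.

Lemma t_subseq_cauchy_on (u : nat -> Z) : (forall n, `|u n| <= 1) ->
  exists2 phi : nat -> nat, {homo phi : m n / (m < n)%N} &
  forall eps, 0 < eps -> exists N, forall n k, (N <= n)%N -> (N <= k)%N ->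
    forall e, E e -> `|t (u (phi k)) e - t (u (phi n)) e| <= eps.
Proof.
move=> ub; have [phi inc [g cg cv]] := t_subseq ub.
exists phi => // eps e0.
have e2 : 0 < eps / 2 by rewrite divr_gt0.
have [N hN] := qnorm_cvg_on hcpt (fun n => @t_cont (u (phi n))) cg cv e2.
exists N => n k Nn Nk e Ee.
have -> : t (u (phi k)) e - t (u (phi n)) e =
    (t (u (phi k)) e - g e) - (t (u (phi n)) e - g e) by ring.
by apply: le_trans (ler_normB _ _) _; rewrite (splitr eps) lerD // hN.
Qed.

(* The quotient operator is bounded: an unbounded sequence of quotient norms
   would have a convergent subsequence. *)
Lemma qnorm_t_bounded : exists B, forall z, `|z| <= 1 -> qnorm J (t z) <= B.
Proof.
apply: contrapT => nB.
have large_at : forall n : nat, exists z, `|z| <= 1 /\ n%:R < qnorm J (t z).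
  move=> n; apply: contrapT => Hn; apply: nB; exists n%:R => z z1.
  by rewrite leNgt; apply/negP => lt; apply: Hn; exists z.
have [u hu] := choice large_at.
have [phi inc [g cg cv]] := t_subseq (fun n => (hu n).1).
move: cv => /cvgrPdist_le /(_ 1 ltr01) [N _ HN].
pose n := maxn N (Num.truncn (1 + supnorm g)).+1.
have hq : qnorm J (t (u (phi n))) <= 1 + supnorm g.
  apply: le_trans (qnorm_triangle E hcpt (@t_cont _) cg) _; rewrite lerD2r.
  by move: (HN n (leq_maxl _ _)); rewrite sub0r normrN ger0_norm // qnorm_ge0.
have large : 1 + supnorm g < ((phi n)%:R : R).
  apply: lt_le_trans (truncnS_gt _) _; rewrite ler_nat.
  by apply: leq_trans (increasing_ge_id inc n); exact: leq_maxr.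
by have := lt_trans (lt_le_trans (hu (phi n)).2 hq) large; rewrite ltxx.
Qed.

Let M := op_norm (qnorm J) t.

Lemma qnorm_le_opnorm z : `|z| <= 1 -> qnorm J (t z) <= M.
Proof.
move=> z1; have [B HB] := qnorm_t_bounded.
apply: sup_upper_bound; last by exists z.
split; first by exists (qnorm J (t 0)), 0 => //; exact: unit_ball0.
by exists B => _ [w w1 <-]; exact: HB.
Qed.

Lemma opnorm_ge0 : 0 <= M.
Proof. exact: le_trans (qnorm_ge0 E _) (qnorm_le_opnorm (unit_ball0 Z)). Qed.

Lemma t_bound_on z e : E e -> `|t z e| <= M * `|z|.
Proof.
move=> Ee; apply: (linear_ball_bound (F := fun z => t z e)) => [a w v|w w1].
  exact: t_linear_on.
exact: le_trans (qnorm_ge_on hcpt (@t_cont _) Ee) (qnorm_le_opnorm w1).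
Qed.

Lemma t_net_on eta : 0 < eta ->
  exists2 zs : seq Z, (forall z, z \in zs -> `|z| <= 1) &
  forall z, `|z| <= 1 -> exists2 z', z' \in zs & forall e, E e -> `|t z e - t z' e| <= eta.
Proof.
move=> eta0; apply: contrapT => nN.
pose far z z' := exists2 e, E e & eta < `|t z e - t z' e|.
(* otherwise every finite subset of the ball misses some point of the ball *)
have next_far : forall zs : seq Z, exists z, (forall z, z \in zs -> `|z| <= 1) ->
    `|z| <= 1 /\ forall z', z' \in zs -> far z z'.
  move=> zs; have [Hzs|nH] := pselect (forall z, z \in zs -> `|z| <= 1); last by exists 0.
  apply: contrapT => H'; apply: nN; exists zs => // z z1.
  apply: contrapT => h; apply: H'; exists z => _; split => // z' hz'.
  apply: contrapT => nf; apply: h; exists z' => // e Ee.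
  by rewrite leNgt; apply/negP => lt; apply: nf; exists e.
have [nxt Hnxt] := choice next_far.
pose build := fix build n := if n is n'.+1 then rcons (build n') (nxt (build n')) else [::].
have build_ball : forall n z, z \in build n -> `|z| <= 1.
  elim=> [//|n IH] z /=; rewrite mem_rcons in_cons => /orP[/eqP ->|]; last exact: IH.
  by have [] := Hnxt (build n) IH.
(* a sequence in the ball whose terms are pairwise far apart on E *)
pose u n := nxt (build n).
have u_ball n : `|u n| <= 1 by have [] := Hnxt (build n) (build_ball n).
have u_far n z' : z' \in build n -> far (u n) z'.
  by have [_] := Hnxt (build n) (build_ball n); apply.
have u_mem : forall n k, (k < n)%N -> u k \in build n.
  elim=> [//|n IH] k; rewrite ltnS leq_eqVlt => /orP[/eqP ->|kn] /=.
    by rewrite mem_rcons mem_head.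
  by rewrite mem_rcons in_cons IH // orbT.
have [phi inc hc] := t_subseq_cauchy_on u_ball.
have [N hN] := hc eta eta0.
have [e Ee hfar] := u_far _ _ (u_mem _ _ (inc _ _ (ltnSn N))).
by have := hN N N.+1 (leqnn N) (leqnSn N) e Ee; rewrite leNgt hfar.
Qed.

Definition controlled (A : set T) (Rf : Z -> T -> R) (C : R) :=
  forall z z' eta, `|z| <= 1 -> `|z'| <= 1 -> 0 <= eta ->
  (forall e, E e -> `|t z e - t z' e| <= eta) ->
  forall x, A x -> `|Rf z x - Rf z' x| <= C * eta.

(* D p x is the largest oscillation between
   p and x of the finitely many members of a net of the unit ball. *)
Lemma oscillation_control (Rf : Z -> T -> R) (C delta : R) :
  0 <= C -> 0 < delta -> (forall z, continuous (Rf z)) -> controlled E Rf C ->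
  exists D : T -> T -> R,
   [/\ forall p, continuous (D p), forall p, D p p = 0 &
       forall p e z, E p -> E e -> `|z| <= 1 -> D p e < delta / 3 ->
         `|Rf z e - Rf z p| <= delta].
Proof.
move=> C0 d0 Rc Rd.
pose eta := delta / 3 / (C + 1).
have C1 : 0 < C + 1 by rewrite ltr_wpDl.
have eta0 : 0 < eta by rewrite !divr_gt0.
have Ceta : C * eta <= delta / 3.
  by rewrite /eta mulrCA ger_pMr ?divr_gt0 // ler_pdivrMr // mul1r lerDl.
have [zs zs_ball zs_net] := t_net_on eta0.
pose D p x := \big[Num.max/0]_(z <- zs) `|Rf z x - Rf z p|.
have D_ge p x z : z \in zs -> `|Rf z x - Rf z p| <= D p x.
  move=> zin.
  exact: (Order.TotalTheory.le_bigmax_seq 0 z xpredT (fun z => `|Rf z x - Rf z p|) zin isT).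
exists D; split.
- by move=> p; apply: cont_bigmax => z; apply: cont_norm; apply: cont_sub => //; exact: cont_cst.
- move=> p; rewrite /D; elim: (zs) => [|z s IH]; first by rewrite big_nil.
  by rewrite big_cons IH subrr normr0 maxxx.
move=> p e z Ep Ee z1 Dlt; have [z' z'in hz'] := zs_net z z1.
have hzz' := Rd z z' eta z1 (zs_ball _ z'in) (ltW eta0) hz'.
rewrite [delta]third_split; apply: (dist_le3 (a' := Rf z' e) (b' := Rf z' p)).
- exact: le_trans (hzz' e Ee) Ceta.
- exact: le_trans (D_ge p e z' z'in) (ltW Dlt).
- exact: le_trans (hzz' p Ep) Ceta.
Qed.

Lemma extension_step (Rf : Z -> T -> R) (m C delta : R) :
  0 <= m -> 0 <= C -> 0 < delta ->
  (forall z, continuous (Rf z)) ->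
  (forall a z w e, E e -> Rf (a *: z + w) e = a * Rf z e + Rf w e) ->
  (forall z e, E e -> `|Rf z e| <= m * `|z|) ->
  controlled E Rf C ->
  exists L : Z -> T -> R,
   [/\ forall z, continuous (L z),
       forall a z w x, L (a *: z + w) x = a * L z x + L w x,
       forall z x, `|L z x| <= m * `|z|,
       controlled setT L C &
       forall z e, E e -> `|Rf z e - L z e| <= delta * `|z|].
Proof.
move=> m0 C0 d0 Rc Rl Rb Rd.
have [D [Dc Dpp osc]] := oscillation_control C0 d0 Rc Rd.
have cE : compact E by exact: subclosed_compact hE hcpt _.
have [ps psE [V [Vc V0 V1 VE Vsub]]] :=
  partition_of_unity cE (divr_gt0 d0 (ltr0n _ 3)) Dc Dpp.
exists (glue ps V Rf); split.
- exact: glue_continuous.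
- move=> a z w x; exact: (glue_linear V psE Rl).
- move=> z x; apply: (weighted_sum_le V0 V1); first by rewrite mulr_ge0.
  by move=> p pin _; apply: Rb; exact: psE.
- move=> z z' eta z1 z'1 eta0 hzz' x _; rewrite glue_sub.
  apply: (weighted_sum_le V0 V1); first by rewrite mulr_ge0.
  by move=> p pin _; apply: Rd => //; exact: psE.
move=> z e Ee.
apply: (linear_ball_bound (F := fun z => Rf z e - glue ps V Rf z e)) => [a u v|u u1].
  by rewrite Rl // (glue_linear V psE Rl); ring.
have -> : Rf u e - glue ps V Rf u e = \sum_(p <- ps) V p e * (Rf u e - Rf u p).
  rewrite -[X in X - _]mul1r -(VE e Ee) mulr_suml /glue -sumrB.
  by apply: eq_bigr => p _; ring.
apply: (weighted_sum_le V0 V1); first exact: ltW.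
by move=> p pin Vp; apply: osc => //; [exact: psE | exact: Vsub].
Qed.

Definition residual_size (n : nat) : R := if n is 0%N then M else (1/2) ^+ n.

Lemma residual_size_ge0 n : 0 <= residual_size n.
Proof. by case: n => [|n] /=; [exact: opnorm_ge0 | rewrite exprn_ge0 // divr_ge0]. Qed.

Lemma residual_size_le n : residual_size n <= (M + 1) * (1/2) ^+ n.
Proof.
case: n => [|n] /=; first by rewrite expr0 mulr1 lerDl.
by rewrite ler_peMl ?exprn_ge0 ?divr_ge0 // lerDr opnorm_ge0.
Qed.

Definition residual_inv (Rf : Z -> T -> R) (n : nat) :=
  [/\ forall z, continuous (Rf z),
      forall a z w e, E e -> Rf (a *: z + w) e = a * Rf z e + Rf w e,
      forall z e, E e -> `|Rf z e| <= residual_size n * `|z| &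
      controlled E Rf (2 ^+ n)].

Definition correction_spec (L Rf : Z -> T -> R) (n : nat) :=
  [/\ forall z, continuous (L z),
      forall a z w x, L (a *: z + w) x = a * L z x + L w x,
      forall z x, `|L z x| <= residual_size n * `|z|,
      controlled setT L (2 ^+ n) &
      forall z e, E e -> `|Rf z e - L z e| <= (1/2) ^+ n.+1 * `|z|].

Lemma correction_exists n Rf : exists L, residual_inv Rf n -> correction_spec L Rf n.
Proof.
have [[Rc Rl Rb Rd]|nh] := pselect (residual_inv Rf n); last by exists (fun _ _ => 0) => /nh.
have [||L HL] := @extension_step Rf (residual_size n) (2 ^+ n) ((1/2) ^+ n.+1)
  (residual_size_ge0 n) _ _ Rc Rl Rb Rd.
- by rewrite exprn_ge0.
- by rewrite exprn_gt0 // divr_gt0.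
by exists L.
Qed.

Definition correction n Rf := proj1_sig (cid (correction_exists n Rf)).

Lemma correctionP n Rf : residual_inv Rf n -> correction_spec (correction n Rf) Rf n.
Proof. exact: (proj2_sig (cid (correction_exists n Rf))). Qed.

Fixpoint residual (n : nat) : Z -> T -> R :=
  if n is k.+1 then fun z x => residual k z x - correction k (residual k) z x else t.

Lemma residual_invariant n : residual_inv (residual n) n.
Proof.
elim: n => [|n [Rc Rl Rb Rd]].
  split => //=; [exact: t_linear_on | exact: t_bound_on |].
  by move=> z z' eta _ _ _ hz e Ee; rewrite expr0 mul1r; exact: hz.
have [Lc Ll _ Ld Lapprox] := correctionP (And4 Rc Rl Rb Rd).
split => /=.
- by move=> z; apply: cont_sub.
- by move=> a z w e Ee; rewrite Rl // Ll; ring.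
- by move=> z e Ee; exact: Lapprox.
move=> z z' eta z1 z'1 eta0 hz e Ee.
have -> : residual n z e - correction n (residual n) z e -
    (residual n z' e - correction n (residual n) z' e) =
  (residual n z e - residual n z' e) -
    (correction n (residual n) z e - correction n (residual n) z' e) by ring.
apply: le_trans (ler_normB _ _) _.
rewrite (_ : 2 ^+ n.+1 * eta = 2 ^+ n * eta + 2 ^+ n * eta); last by rewrite exprS; ring.
by apply: lerD; [exact: Rd | exact: Ld].
Qed.

Definition corr n := correction n (residual n).

Lemma corrP n : correction_spec (corr n) (residual n) n.
Proof. by have [? ? ? ?] := residual_invariant n; exact: correctionP. Qed.

Definition partial_lift n z x := t z x - residual n z x.

Lemma partial_liftS n z x : partial_lift n.+1 z x = partial_lift n z x + corr n z x.
Proof. by rewrite /partial_lift /= /corr; ring. Qed.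

Lemma partial_lift_linear n a z w x :
  partial_lift n (a *: z + w) x = a * partial_lift n z x + partial_lift n w x.
Proof.
elim: n => [|n IH]; first by rewrite /partial_lift /= !subrr; ring.
by rewrite !partial_liftS IH; have [_ Ll _ _ _] := corrP n; rewrite Ll; ring.
Qed.

Lemma partial_lift_cont n z : continuous (partial_lift n z).
Proof. by apply: cont_sub => //; have [] := residual_invariant n. Qed.

Definition tail_const (z : Z) := 2 * (M + 1) * `|z|.

Lemma tail_const_ge0 z : 0 <= tail_const z.
Proof. by rewrite /tail_const !mulr_ge0 // addr_ge0 // opnorm_ge0. Qed.

Lemma tail_const_ball z : `|z| <= 1 -> tail_const z <= 2 * (M + 1).
Proof. by move=> z1; rewrite /tail_const ler_piMr // mulr_ge0 // addr_ge0 // opnorm_ge0. Qed.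

Lemma partial_lift_diff n d z x : `|partial_lift (n + d) z x - partial_lift n z x| <=
  tail_const z * ((1/2) ^+ n - (1/2) ^+ (n + d)).
Proof.
elim: d => [|d IH]; first by rewrite addn0 !subrr normr0 mulr0.
rewrite addnS partial_liftS.
have [_ _ Lb _ _] := corrP (n + d).
have hcorr : `|corr (n + d) z x| <= (M + 1) * (1/2) ^+ (n + d) * `|z|.
  exact: le_trans (Lb z x) (ler_wpM2r (normr_ge0 z) (residual_size_le _)).
rewrite (_ : partial_lift (n + d) z x + corr (n + d) z x - partial_lift n z x =
   (partial_lift (n + d) z x - partial_lift n z x) + corr (n + d) z x); last by ring.
apply: le_trans (ler_normD _ _) _.
rewrite exprS; set q := (1/2 : R) ^+ (n + d) in hcorr IH *.
have -> : tail_const z * ((1 / 2) ^+ n - 1 / 2 * q) =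
    tail_const z * ((1 / 2) ^+ n - q) + (M + 1) * q * `|z| by rewrite /tail_const; field.
exact: lerD.
Qed.

Lemma partial_lift_cauchy z x n k : (n <= k)%N ->
  `|partial_lift k z x - partial_lift n z x| <= tail_const z * (1/2) ^+ n.
Proof.
move=> nk; rewrite -(subnKC nk); apply: le_trans (partial_lift_diff _ _ _ _) _.
apply: ler_wpM2l; first exact: tail_const_ge0.
by rewrite lerBlDr lerDl exprn_ge0 // divr_ge0.
Qed.

Definition ext z x := limn (fun n => partial_lift n z x).

Lemma ext_near z x n : `|ext z x - partial_lift n z x| <= tail_const z * (1/2) ^+ n.
Proof.
apply: limn_dist_le => [|k]; last exact: partial_lift_cauchy.
apply: cvgn_anchored_cauchy => eps e0; have [N hN] := geometric_half_lt (tail_const z) e0.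
by exists N => k Nk; apply: le_trans (partial_lift_cauchy z x Nk) (ltW hN).
Qed.

Lemma ext_bound z x : `|ext z x| <= tail_const z.
Proof. by have := ext_near z x 0; rewrite /partial_lift /= subrr subr0 expr0 mulr1. Qed.

Lemma ext_on z e : E e -> ext z e = t z e.
Proof.
move=> Ee; apply/eqP; rewrite -subr_eq0; apply/eqP.
apply: (@eq0_geometric_bound _ _ (tail_const z + (M + 1) * `|z|)) => n.
have [_ _ Rb _] := residual_invariant n.
have hres := le_trans (Rb z e Ee) (ler_wpM2r (normr_ge0 z) (residual_size_le n)).
have -> : ext z e - t z e = (ext z e - partial_lift n z e) - residual n z e.
  by rewrite /partial_lift; ring.
apply: le_trans (ler_normB _ _) _; rewrite mulrDl.
by apply: lerD; [exact: ext_near | rewrite mulrAC].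
Qed.

Lemma ext_linear a z w x : ext (a *: z + w) x = a * ext z x + ext w x.
Proof.
apply/eqP; rewrite -subr_eq0; apply/eqP.
apply: (@eq0_geometric_bound _ _ (tail_const (a *: z + w) + `|a| * tail_const z + tail_const w)) => n.
have -> : ext (a *: z + w) x - (a * ext z x + ext w x) =
   (ext (a *: z + w) x - partial_lift n (a *: z + w) x) - a * (ext z x - partial_lift n z x)
   - (ext w x - partial_lift n w x) by rewrite partial_lift_linear; ring.
apply: le_trans (ler_normB _ _) _.
rewrite !mulrDl; apply: lerD; last exact: ext_near.
apply: le_trans (ler_normB _ _) _; apply: lerD; first exact: ext_near.
by rewrite normrM -mulrA ler_wpM2l // ext_near.
Qed.

Lemma ext_cont z : continuous (ext z).
Proof.
apply: continuous_uniform_approx => eps e0.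
have [n hn] := geometric_half_lt (tail_const z) e0.
by exists (partial_lift n z); [exact: partial_lift_cont | move=> x; exact: le_trans (ext_near z x n) (ltW hn)].
Qed.

Lemma partial_lift_controlled n : controlled setT (partial_lift n) (2 ^+ n - 1).
Proof.
move=> z z' eta z1 z'1 eta0 hz x _; elim: n => [|n IH].
  by rewrite /partial_lift /= !subrr normr0 ?expr0 ?subrr mul0r.
rewrite !partial_liftS; have [_ _ _ Ld _] := corrP n.
have -> : partial_lift n z x + corr n z x - (partial_lift n z' x + corr n z' x) =
  (partial_lift n z x - partial_lift n z' x) + (corr n z x - corr n z' x) by ring.
apply: le_trans (ler_normD _ _) _.
rewrite (_ : (2 ^+ n.+1 - 1) * eta = (2 ^+ n - 1) * eta + 2 ^+ n * eta); last first.
  by rewrite exprS; ring.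
by apply: lerD => //; exact: Ld.
Qed.

Lemma ext_modulus eps : 0 < eps -> exists2 eta, 0 < eta &
  forall z z', `|z| <= 1 -> `|z'| <= 1 ->
  (forall e, E e -> `|t z e - t z' e| <= eta) -> forall x, `|ext z x - ext z' x| <= eps.
Proof.
move=> e0; have e3 : 0 < eps / 3 by rewrite divr_gt0.
have [n hn] := geometric_half_lt (2 * (M + 1)) e3.
have pn : 0 < (2 : R) ^+ n by rewrite exprn_gt0.
exists (eps / 3 / 2 ^+ n); first by rewrite divr_gt0.
move=> z z' z1 z'1 hz x.
have tail u : `|u| <= 1 -> `|ext u x - partial_lift n u x| <= eps / 3.
  move=> u1; apply: le_trans (ext_near u x n) _; apply: le_trans (ltW hn).
  by rewrite ler_wpM2r ?exprn_ge0 ?divr_ge0 // tail_const_ball.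
rewrite [eps]third_split; apply: (dist_le3 (tail z z1) _ (tail z' z'1)).
apply: le_trans (partial_lift_controlled n z1 z'1 (ltW (divr_gt0 e3 pn)) hz I) _.
rewrite (_ : (2 ^+ n - 1) * (eps / 3 / 2 ^+ n) = eps / 3 * ((2 ^+ n - 1) / 2 ^+ n)).
  by rewrite ger_pMr // ler_pdivrMr // mul1r lerBlDr lerDl.
by rewrite mulrCA mulrA.
Qed.

Definition pointwise_norm x := sup [set `|ext z x| | z in @unit_ball R Z].

Lemma pointwise_norm_ub z x : `|z| <= 1 -> `|ext z x| <= pointwise_norm x.
Proof.
move=> z1; apply: sup_upper_bound; last by exists z.
split; first by exists `|ext z x|, z.
exists (2 * (M + 1)) => _ [w w1 <-].
exact: le_trans (ext_bound w x) (tail_const_ball w1).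
Qed.

Lemma pointwise_norm_le x B :
  (forall z, `|z| <= 1 -> `|ext z x| <= B) -> pointwise_norm x <= B.
Proof.
move=> h; apply: ge_sup; last by move=> _ [w w1 <-]; exact: h.
by exists `|ext 0 x|, 0 => //; exact: unit_ball0.
Qed.

Lemma pointwise_norm_on e : E e -> pointwise_norm e <= M.
Proof.
move=> Ee; apply: pointwise_norm_le => z z1; rewrite ext_on //.
by apply: le_trans (t_bound_on z Ee) _; rewrite ler_piMr // opnorm_ge0.
Qed.

(* Continuity of N: ext is equicontinuous, via a finite net and its modulus. *)
Lemma pointwise_norm_cont : continuous pointwise_norm.
Proof.
move=> x; apply/cvgrPdist_le => eps e0.
have e3 : 0 < eps / 3 by rewrite divr_gt0.
have [eta eta0 Hm] := ext_modulus e3.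
have [zs zs_ball zs_net] := t_net_on eta0.
have : \forall y \near x, forall z', z' \in zs -> `|ext z' x - ext z' y| <= eps / 3.
  apply: near_all_mem => z' _.
  by have := @ext_cont z' x; move=> /cvgrPdist_le /(_ _ e3).
apply: filterS => y hy.
have close z : `|z| <= 1 -> `|ext z x - ext z y| <= eps.
  move=> z1; have [z' z'in hz'] := zs_net z z1.
  rewrite [eps]third_split; apply: (dist_le3 (a' := ext z' x) (b' := ext z' y)).
  - exact: Hm z z' z1 (zs_ball z' z'in) hz' x.
  - exact: hy z' z'in.
  - exact: Hm z z' z1 (zs_ball z' z'in) hz' y.
have Nyx : pointwise_norm y <= pointwise_norm x + eps.
  apply: pointwise_norm_le => z z1; have := close z z1; have := pointwise_norm_ub x z1.
  have : `|ext z y| <= `|ext z x| + `|ext z x - ext z y|.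
    by rewrite {1}(_ : ext z y = ext z x - (ext z x - ext z y)); [exact: ler_normB | ring].
  lra.
have Nxy : pointwise_norm x <= pointwise_norm y + eps.
  apply: pointwise_norm_le => z z1; have := close z z1; have := pointwise_norm_ub y z1.
  have : `|ext z x| <= `|ext z y| + `|ext z x - ext z y|.
    by rewrite {1}(_ : ext z x = ext z y + (ext z x - ext z y)); [exact: ler_normD | ring].
  lra.
rewrite ler_norml; apply/andP; split; lra.
Qed.

Definition is_lift (s : Z -> T -> R) :=
  [/\ forall z, continuous (s z),
      forall (a : R) (z w : Z) (x : T), s (a *: z + w) x = a * s z x + s w x,
      compact_op supnorm s,
      forall z, J (fun x => s z x - t z x) &
      op_norm supnorm s = M].

Section Normalisation.
Hypothesis M_gt0 : 0 < M.

(* Damping factor M / max(M, N x): equal to 1 on E, at most 1 everywhere,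
   and it brings the pointwise norm down to M. *)
Definition damping x := M / Num.max M (pointwise_norm x).

Definition lift z x := damping x * ext z x.

Lemma damping_den_gt0 x : 0 < Num.max M (pointwise_norm x).
Proof. by rewrite lt_max M_gt0. Qed.

Lemma damping_cont : continuous damping.
Proof.
apply: cont_mul; first exact: cont_cst.
apply: cont_inv; first by move=> x; rewrite gt_eqF // damping_den_gt0.
by apply: cont_max; [exact: cont_cst | exact: pointwise_norm_cont].
Qed.

Lemma damping_ge0 x : 0 <= damping x.
Proof. by rewrite divr_ge0 // ?ltW // damping_den_gt0. Qed.

Lemma damping_le1 x : damping x <= 1.
Proof. by rewrite ler_pdivrMr ?damping_den_gt0 // mul1r le_max lexx. Qed.

Lemma damping_on e : E e -> damping e = 1.
Proof.
move=> Ee; rewrite /damping (_ : Num.max M _ = M); last exact/max_idPl/pointwise_norm_on.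
by rewrite divff // gt_eqF.
Qed.

Lemma lift_cont z : continuous (lift z).
Proof. by apply: cont_mul; [exact: damping_cont | exact: ext_cont]. Qed.

Lemma lift_linear a z w x : lift (a *: z + w) x = a * lift z x + lift w x.
Proof. by rewrite /lift ext_linear; ring. Qed.

Lemma lift_on z e : E e -> lift z e = t z e.
Proof. by move=> Ee; rewrite /lift damping_on // mul1r ext_on. Qed.

Lemma lift_bound z x : `|z| <= 1 -> `|lift z x| <= M.
Proof.
move=> z1; rewrite /lift normrM ger0_norm ?damping_ge0 //.
apply: le_trans (ler_wpM2l (damping_ge0 x) (pointwise_norm_ub x z1)) _.
rewrite /damping -mulrA ger_pMr // mulrC ler_pdivrMr ?damping_den_gt0 // mul1r.
by rewrite le_max lexx orbT.
Qed.

Lemma lift_sub_le z z' x : `|lift z x - lift z' x| <= `|ext z x - ext z' x|.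
Proof.
rewrite /lift -mulrBr normrM ger0_norm ?damping_ge0 //.
by rewrite ler_piMl // damping_le1.
Qed.

Lemma lift_vanishing z : J (fun x => lift z x - t z x).
Proof.
split; first by apply: cont_sub; [exact: lift_cont | exact: t_cont].
by move=> e Ee; rewrite lift_on // subrr.
Qed.

(* Compactness: a subsequence converging on E converges uniformly after
   lifting, by the modulus of ext and the completeness of C(T). *)
Lemma lift_compact : compact_op supnorm lift.
Proof.
move=> u hu.
have preimage : forall n, exists z, `|z| <= 1 /\ lift z = u n.
  by move=> n; have [z z1 <-] := hu n; exists z.
have [zn hzn] := choice preimage.
have [phi inc hc] := t_subseq_cauchy_on (fun n => (hzn n).1).
have [|G cG cv] := @uniform_cauchy_limit _ _ (fun n => lift (zn (phi n))) (fun n => @lift_cont _).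
  move=> eps e0; have [eta eta0 Hm] := ext_modulus e0.
  have [N hN] := hc eta eta0; exists N => n k Nn Nk x.
  apply: le_trans (lift_sub_le _ _ _) _.
  by apply: Hm; [exact: (hzn _).1 | exact: (hzn _).1 | exact: hN].
exists phi; split => //; exists G; split => //.
suff -> : (fun n => supnorm (fun x => u (phi n) x - G x)) =
  (fun n => supnorm (fun x => lift (zn (phi n)) x - G x)) by [].
by apply: funext => n; rewrite (hzn (phi n)).2.
Qed.

Lemma lift_opnorm : op_norm supnorm lift = M.
Proof.
have lift_le z : `|z| <= 1 -> supnorm (lift z) <= M.
  by move=> z1; apply: supnorm_le => [|x]; [exact: ltW | exact: lift_bound].
apply/eqP; rewrite eq_le; apply/andP; split.
  by apply: ge_sup => [|_ [z z1 <-]]; [exists (supnorm (lift 0)), 0; first exact: unit_ball0 | exact: lift_le].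
apply: ge_sup => [|_ [z z1 <-]]; first by exists (qnorm J (t 0)), 0; first exact: unit_ball0.
have hJ : J (fun x => t z x - lift z x).
  split; first by apply: cont_sub; [exact: t_cont | exact: lift_cont].
  by move=> e Ee; rewrite lift_on // subrr.
apply: le_trans (qnorm_le (t z) hJ) _.
have -> : (fun x => t z x - (t z x - lift z x)) = lift z by apply: funext => x; ring.
apply: sup_upper_bound; last by exists z.
by split; [exists (supnorm (lift 0)), 0; first exact: unit_ball0 | exists M => _ [w w1 <-]; exact: lift_le].
Qed.

Lemma lift_is_lift : is_lift lift.
Proof.
split; [exact: lift_cont | exact: lift_linear | exact: lift_compact |
        exact: lift_vanishing | exact: lift_opnorm].
Qed.

End Normalisation.

Lemma zero_is_lift : M = 0 -> is_lift (fun _ _ => 0).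
Proof.
move=> M0.
have zero_sup (A : set R) : A !=set0 -> A `<=` [set 0] -> sup A = 0.
  move=> A0 A_0; apply/eqP; rewrite eq_le; apply/andP; split.
    by apply: ge_sup => // r /A_0 ->.
  by have [r Ar] := A0; rewrite -(A_0 r Ar); apply: sup_upper_bound => //; split => //; exists 0 => s /A_0 ->.
split.
- by move=> z; exact: cont_cst.
- by move=> a z w x; rewrite mulr0 addr0.
- move=> u hu; exists id; split => //; exists (fun _ => 0); split; first exact: cont_cst.
  apply: cvg_near_cst; apply: nearW => n; have [z _ <-] := hu n.
  by rewrite (_ : (fun _ : T => 0 - 0) = fun _ => 0 : R) ?supnorm0 // subrr.
- move=> z; split; first by apply: cont_sub; [exact: cont_cst | exact: t_cont].
  move=> e Ee; have := t_bound_on z Ee; rewrite M0 mul0r normr_le0 => /eqP ->.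
  by rewrite subrr.
rewrite M0 /op_norm; apply: zero_sup.
  by exists (supnorm (fun _ : T => 0 : R)), 0; first exact: unit_ball0.
by move=> _ [z _ <-]; rewrite supnorm0.
Qed.

Lemma lift_exists : exists s, is_lift s.
Proof.
have [M_gt0|M_le0] := ltP 0 M; first by exists lift; exact: lift_is_lift.
by exists (fun _ _ => 0); apply: zero_is_lift; apply/eqP; rewrite eq_le M_le0 opnorm_ge0.
Qed.

End Lift.

Lemma cqlp_vanishing_on (T : topologicalType) (R : realType) (E : set T) :
  compact [set: T] -> closed E -> @CQLP_C T R (vanishing_on E).
Proof.
move=> hcpt hE Z t t_cont t_lin t_compact.
exact: (lift_exists hcpt hE t_cont t_lin t_compact).
Qed.

Theorem mainTheorem1 (T : topologicalType) (R : realType) (E : set T)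
  (hcpt : compact [set: T]) (hhaus : hausdorff_space T) (hE : closed E) :
  @CQLP_C T R [set f : T -> R | continuous f /\ forall e, E e -> f e = 0].
Proof. exact: cqlp_vanishing_on hcpt hE. Qed.
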